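(* For each $t\in\{0,1,\dots,T-1\}$ and $i\in\{1,\dots,N\}$, the control limits satisfy $\lim_{k\to\infty}\delta_i^{(k,t)}=\xi_i$; that is, for all sufficiently large $k$, replacement is not optimal in any state $(x,k)$ with $x<\xi_i$ at epoch $t$.
   Context: Fix integers $N\ge1$, $T\ge1$, reals $\alpha_0,\beta_0>0$, and for each $i\in\{1,\dots,N\}$ an integer failure threshold $\xi_i\ge1$ and costs $0<c_p^i<c_u^i$. $\mathbb{N}_0=\{0,1,2,\dots\}$. For real $r>0$ and $p\in(0,1)$, $NB(r,p)$ is the distribution on $\mathbb{N}_0$ with $P(n)=\frac{\Gamma(n+r)}{\Gamma(r)n!}p^r(1-p)^n$; $NB(0,p)$ is the point mass at $0$. For $t\in\{0,\dots,T\}$ let $p_t=\frac{\beta_0+Nt}{\beta_0+Nt+1}$. Let $\mathbb{I}_i(x)=1$ if $x\ge\xi_i$, else $0$; $\mathcal{A}_i(x)=\{0,1\}$ if $x<\xi_i$ and $\{1\}$ if $x\ge\xi_i$ ($a=1$: replacement, $a=0$: no action); $C_i(x,a)=a(1-\mathbb{I}_i(x))c_p^i+\mathbb{I}_i(x)c_u^i$. Define $\tilde V^{N,i}_T(x,k)=\mathbb{I}_i(x)c_u^i$ and for $t=T-1,\dots,0$: $\tilde V^{N,i}_t(x,k)=\min_{a\in\mathcal{A}_i(x)}\{C_i(x,a)+\mathbb{E}[\tilde V^{N,i}_{t+1}(x(1-a)+Z,\;k+Z+K)]\}$, where $Z\sim NB(\alpha_0+k,p_t)$ and $K\sim NB((N-1)(\alpha_0+k),p_t)$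 are independent. An action is optimal if it attains this minimum. The control limit $\delta_i^{(k,t)}\in\{1,\dots,\xi_i\}$ is the (unique) integer such that, for every $x\in\mathbb{N}_0$, the action $a=1$ is optimal in state $(x,k)$ at epoch $t$ iff $x\ge\delta_i^{(k,t)}$ (its existence is a result of the paper). *)

From Stdlib Require Import Reals Arith.
From Coquelicot Require Import Coquelicot.
Open Scope R_scope.

(* rising factorial r (r+1) ... (r+n-1) = Gamma(n+r)/Gamma(r) for r > 0 *)
Fixpoint rising (r : R) (n : nat) : R :=
  match n with
  | O => 1
  | S m => rising r m * (r + INR m)
  end.

(* pmf of NB(r,p) on N_0: Gamma(n+r)/(Gamma(r) n!) p^r (1-p)^n.
   For r = 0 this is the point mass at 0 (rising 0 n = 0 for n >= 1). *)
Definition nb_pmf (r p : R) (n : nat) : R :=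
  rising r n / INR (Factorial.fact n) * Rpower p r * (1 - p) ^ n.

(* E[f(Z,K)] for independent Z ~ NB(r1,p), K ~ NB(r2,p). *)
Definition nb_expect (r1 r2 p : R) (f : nat -> nat -> R) : R :=
  Series (fun z => Series (fun j => nb_pmf r1 p z * nb_pmf r2 p j * f z j)).

Definition p_t (N : nat) (b0 : R) (t : nat) : R :=
  (b0 + INR N * INR t) / (b0 + INR N * INR t + 1).

Definition ind (xi x : nat) : R := if (xi <=? x)%nat then 1 else 0.

(* a = true : replacement (a=1), a = false : no action (a=0) *)
Definition aR (a : bool) : R := if a then 1 else 0.

Definition admissible (xi x : nat) (a : bool) : Prop := a = true \/ (x < xi)%nat.

Definition cost (xi : nat) (cp cu : R) (x : nat) (a : bool) : R :=
  aR a * (1 - ind xi x) * cp + ind xi x * cu.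

Definition qval (N : nat) (a0 b0 : R) (xi : nat) (cp cu : R)
    (Vnext : nat -> nat -> R) (t x k : nat) (a : bool) : R :=
  cost xi cp cu x a +
  nb_expect (a0 + INR k) (INR (N - 1) * (a0 + INR k)) (p_t N b0 t)
    (fun z j => Vnext (if a then z else (x + z)%nat) (k + z + j)%nat).

(* value function indexed by the number r of remaining epochs: epoch T - r *)
Fixpoint Vrem (N T : nat) (a0 b0 : R) (xi : nat) (cp cu : R) (r : nat)
    (x k : nat) : R :=
  match r with
  | O => ind xi x * cu
  | S r' =>
      let q := qval N a0 b0 xi cp cu (Vrem N T a0 b0 xi cp cu r') (T - S r') x k in
      if (xi <=? x)%nat then q true else Rmin (q false) (q true)
  end.

Definition Vt (N T : nat) (a0 b0 : R) (xi : nat) (cp cu : R) (t x k : nat) : R :=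
  Vrem N T a0 b0 xi cp cu (T - t) x k.

Definition optimal (N T : nat) (a0 b0 : R) (xi : nat) (cp cu : R)
    (t x k : nat) (a : bool) : Prop :=
  admissible xi x a /\
  forall b, admissible xi x b ->
    qval N a0 b0 xi cp cu (Vt N T a0 b0 xi cp cu (t + 1)) t x k a <=
    qval N a0 b0 xi cp cu (Vt N T a0 b0 xi cp cu (t + 1)) t x k b.

From Pilot Require Import Defs.
From Stdlib Require Import Reals ZArith Lra Lia.
From Coquelicot Require Import Coquelicot.
Open Scope R_scope.

(* In a state
   (x,k) with x < xi, replacing costs cp immediately and restarts the age at Z,
   while doing nothing moves the age to x + Z; the random level k + Z + K is
   the same in both cases.  Once an age is >= xi replacement is forced and the
   continuation value no longer depends on the age, so the two expectations
   only differ on the event {Z < xi}.  Hence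
     Q(replace) - Q(keep) >= cp - (B/p) * P(Z <= xi - 1),
   where B bounds the value function uniformly.  Since Z ~ NB(a0 + k, p_t), the
   mass of the fixed finite set {0,...,xi-1} tends to 0 as k -> oo, so for large
   k replacement is strictly worse than keeping, i.e. never optimal. *)

Lemma rising_nonneg r n : 0 <= r -> 0 <= rising r n.
Proof.
  intros Hr; induction n as [|n IH]; simpl; [lra|].
  apply Rmult_le_pos; [exact IH|]. pose proof (pos_INR n); lra.
Qed.

Lemma rising_pos r n : 0 < r -> 0 < rising r n.
Proof.
  intros Hr; induction n as [|n IH]; simpl; [lra|].
  apply Rmult_lt_0_compat; [exact IH|]. pose proof (pos_INR n); lra.
Qed.

Lemma rising_mono r s n : 0 <= r -> r <= s -> rising r n <= rising s n.
Proof.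
  intros Hr Hrs; induction n as [|n IH]; simpl; [lra|].
  pose proof (pos_INR n).
  apply Rmult_le_compat; [apply rising_nonneg; exact Hr | lra | exact IH | lra].
Qed.

Lemma rising_shift r j : rising r (S j) = r * rising (r + 1) j.
Proof.
  induction j as [|j IH]; [simpl; ring|].
  change (rising r (S (S j))) with (rising r (S j) * (r + INR (S j))).
  change (rising (r + 1) (S j)) with (rising (r + 1) j * (r + 1 + INR j)).
  rewrite IH, S_INR. ring.
Qed.

Lemma fact_INR_pos j : 0 < INR (fact j).
Proof. apply lt_0_INR, lt_O_fact. Qed.

Definition nb_coef (r : R) (j : nat) : R := rising r j / INR (fact j).

Lemma nb_pmf_factor r p n : nb_pmf r p n = Rpower p r * (nb_coef r n * (1 - p) ^ n).
Proof. unfold nb_pmf, nb_coef. ring. Qed.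

Lemma nb_coef_nonneg r j : 0 <= r -> 0 <= nb_coef r j.
Proof.
  intros Hr; unfold nb_coef.
  apply Rmult_le_pos; [apply rising_nonneg; exact Hr|].
  apply Rlt_le, Rinv_0_lt_compat, fact_INR_pos.
Qed.

Lemma nb_coef_0 r : nb_coef r 0 = 1.
Proof. unfold nb_coef; simpl; lra. Qed.

Lemma nb_coef_zero_param j : nb_coef 0 (S j) = 0.
Proof. unfold nb_coef. rewrite rising_shift. unfold Rdiv; ring. Qed.

(* Pascal-type recursion, i.e. the coefficient identity behind
   (1-q)^-(r+1) = (1-q)^-1 (1-q)^-r. *)
Lemma nb_coef_pascal r j : nb_coef (r + 1) (S j) = nb_coef (r + 1) j + nb_coef r (S j).
Proof.
  unfold nb_coef. rewrite (rising_shift r j).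
  change (rising (r + 1) (S j)) with (rising (r + 1) j * (r + 1 + INR j)).
  change (fact (S j)) with (S j * fact j)%nat. rewrite mult_INR, S_INR.
  pose proof (fact_INR_pos j); pose proof (pos_INR j). field. lra.
Qed.

(* Truncated generating series sum_{j<=n} nb_coef r j q^j of (1-q)^-r. *)
Definition nb_gen (r q : R) (n : nat) : R := sum_f_R0 (fun j => nb_coef r j * q ^ j) n.

Lemma nb_gen_recursion r q n :
  (1 - q) * nb_gen (r + 1) q n + nb_coef (r + 1) n * q ^ S n = nb_gen r q n.
Proof.
  unfold nb_gen; induction n as [|n IH]; simpl.
  - rewrite !nb_coef_0. ring.
  - rewrite nb_coef_pascal, <- IH. simpl. ring.
Qed.

Lemma nb_gen_step r q n : 0 <= r -> 0 <= q -> (1 - q) * nb_gen (r + 1) q n <= nb_gen r q n.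
Proof.
  intros Hr Hq. rewrite <- (nb_gen_recursion r q n).
  pose proof (Rmult_le_pos _ _ (nb_coef_nonneg (r + 1) n ltac:(lra)) (pow_le q (S n) Hq)).
  lra.
Qed.

Lemma nb_gen_zero q n : nb_gen 0 q n = 1.
Proof.
  unfold nb_gen; induction n as [|n IH]; simpl.
  - rewrite nb_coef_0; ring.
  - rewrite IH, nb_coef_zero_param. ring.
Qed.

Lemma nb_gen_nat_le m q n : 0 <= q < 1 -> (1 - q) ^ m * nb_gen (INR m) q n <= 1.
Proof.
  intros Hq; induction m as [|m IH].
  - simpl. rewrite nb_gen_zero. lra.
  - rewrite S_INR. simpl.
    pose proof (nb_gen_step (INR m) q n (pos_INR m) ltac:(lra)).
    pose proof (pow_le (1 - q) m ltac:(lra)).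
    replace ((1 - q) * (1 - q) ^ m * nb_gen (INR m + 1) q n)
      with ((1 - q) ^ m * ((1 - q) * nb_gen (INR m + 1) q n)) by ring.
    eapply Rle_trans; [|exact IH]. apply Rmult_le_compat_l; assumption.
Qed.

Lemma nb_gen_mono r s q n : 0 <= r -> r <= s -> 0 <= q -> nb_gen r q n <= nb_gen s q n.
Proof.
  intros Hr Hrs Hq; unfold nb_gen, nb_coef. apply sum_Rle; intros j _.
  apply Rmult_le_compat_r; [apply pow_le; exact Hq|].
  apply Rmult_le_compat_r; [apply Rlt_le, Rinv_0_lt_compat, fact_INR_pos|].
  apply rising_mono; assumption.
Qed.

Lemma Rpower_antitone p a b : 0 < p < 1 -> a <= b -> Rpower p b <= Rpower p a.
Proof.
  intros Hp Hab; unfold Rpower.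
  assert (Hln : ln p < 0) by (rewrite <- ln_1; apply ln_increasing; lra).
  destruct (Rle_lt_or_eq_dec a b Hab) as [Hlt| ->]; [|lra].
  left; apply exp_increasing; nra.
Qed.

Lemma nat_ceiling r : 0 <= r -> exists m : nat, r <= INR m <= r + 1.
Proof.
  intros Hr; destruct (archimed r) as [H1 H2].
  assert (Hz : (0 <= up r)%Z) by (apply le_IZR; lra).
  exists (Z.to_nat (up r)). rewrite INR_IZR_INZ, Z2Nat.id by exact Hz. lra.
Qed.

(* Crude total-mass bound: every partial sum of the NB(r,p) weights is <= 1/p.
   (Rounding r up to an integer m costs at most one factor p.) *)
Lemma nb_partial_mass_le r p n : 0 <= r -> 0 < p < 1 -> sum_f_R0 (nb_pmf r p) n <= / p.
Proof.
  intros Hr Hp.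
  assert (Hfactor : sum_f_R0 (nb_pmf r p) n = Rpower p r * nb_gen r (1 - p) n).
  { unfold nb_gen. rewrite scal_sum. apply sum_eq; intros j _. rewrite nb_pmf_factor. ring. }
  destruct (nat_ceiling r Hr) as [m Hm].
  assert (Hgen : nb_gen r (1 - p) n <= nb_gen (INR m) (1 - p) n)
    by (apply nb_gen_mono; lra).
  assert (Hnat : p ^ m * nb_gen (INR m) (1 - p) n <= 1).
  { pose proof (nb_gen_nat_le m (1 - p) n ltac:(lra)) as H.
    replace (1 - (1 - p)) with p in H by ring. exact H. }
  assert (Hpow : Rpower p r <= p ^ m / p).
  { replace (p ^ m / p) with (Rpower p (INR m + - (1)))
      by (rewrite Rpower_plus, Rpower_Ropp, Rpower_1, Rpower_pow by lra; reflexivity).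
    apply Rpower_antitone; lra. }
  assert (Hgen0 : 0 <= nb_gen r (1 - p) n).
  { apply cond_pos_sum; intros j.
    apply Rmult_le_pos; [apply nb_coef_nonneg; exact Hr | apply pow_le; lra]. }
  assert (Hinv : 0 < / p) by (apply Rinv_0_lt_compat; lra).
  rewrite Hfactor.
  apply Rle_trans with (p ^ m / p * nb_gen (INR m) (1 - p) n).
  - apply Rmult_le_compat; [unfold Rpower; apply Rlt_le, exp_pos | exact Hgen0 | exact Hpow | exact Hgen].
  - unfold Rdiv. replace (p ^ m * / p * nb_gen (INR m) (1 - p) n)
      with (/ p * (p ^ m * nb_gen (INR m) (1 - p) n)) by ring.
    rewrite <- (Rmult_1_r (/ p)) at 2. apply Rmult_le_compat_l; lra.
Qed.

Lemma nb_pmf_nonneg r p n : 0 <= r -> 0 < p < 1 -> 0 <= nb_pmf r p n.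
Proof.
  intros Hr Hp. rewrite nb_pmf_factor.
  apply Rmult_le_pos; [unfold Rpower; apply Rlt_le, exp_pos|].
  apply Rmult_le_pos; [apply nb_coef_nonneg; exact Hr | apply pow_le; lra].
Qed.

Lemma nb_pmf_pos r p z : 0 < r -> 0 < p < 1 -> 0 < nb_pmf r p z.
Proof.
  intros Hr Hp; unfold nb_pmf. repeat apply Rmult_lt_0_compat.
  - apply rising_pos; exact Hr.
  - apply Rinv_0_lt_compat, fact_INR_pos.
  - unfold Rpower; apply exp_pos.
  - apply pow_lt; lra.
Qed.

Lemma series_nonneg_bounded (a : nat -> R) M :
  (forall n, 0 <= a n) -> (forall n, sum_f_R0 a n <= M) ->
  ex_series a /\ 0 <= Series a <= M.
Proof.
  intros Ha HM.
  assert (Hinc : forall n, sum_n a n <= sum_n a (S n)).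
  { intros n. rewrite !sum_n_Reals. simpl. specialize (Ha (S n)). lra. }
  assert (HM' : forall n, sum_n a n <= M) by (intros n; rewrite sum_n_Reals; auto).
  destruct (ex_finite_lim_seq_incr _ _ Hinc HM') as [l Hl].
  assert (HS : Series a = l) by (unfold Series; rewrite (is_lim_seq_unique _ _ Hl); reflexivity).
  split; [exists l; exact Hl|]. rewrite HS. split.
  - apply (is_lim_seq_le (fun _ => 0) (sum_n a) 0 l); [|apply is_lim_seq_const|exact Hl].
    intros n; rewrite sum_n_Reals. apply cond_pos_sum; exact Ha.
  - apply (is_lim_seq_le (sum_n a) (fun _ => M) l M); [exact HM'|exact Hl|apply is_lim_seq_const].
Qed.

Lemma series_finite_support (a : nat -> R) m :
  (forall n, (m < n)%nat -> a n = 0) -> Series a = sum_f_R0 a m.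
Proof.
  intros H. apply is_series_unique.
  assert (Hd : forall d, sum_f_R0 a (m + d) = sum_f_R0 a m).
  { induction d as [|d IH]; [rewrite Nat.add_0_r; reflexivity|].
    rewrite Nat.add_succ_r. simpl. rewrite IH, H by lia. ring. }
  change (is_lim_seq (sum_n a) (sum_f_R0 a m)).
  apply is_lim_seq_ext_loc with (u := fun _ => sum_f_R0 a m); [|apply is_lim_seq_const].
  exists m; intros n Hn. rewrite sum_n_Reals.
  replace n with (m + (n - m))%nat by lia. rewrite Hd. reflexivity.
Qed.

Definition nb_inner (r1 r2 p : R) (f : nat -> nat -> R) (z : nat) : R :=
  Series (fun j => nb_pmf r1 p z * nb_pmf r2 p j * f z j).

Section Expectation.
  Variables (r1 r2 p B : R) (f : nat -> nat -> R).
  Hypotheses (Hr1 : 0 <= r1) (Hr2 : 0 <= r2) (Hp : 0 < p < 1).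
  Hypothesis (Hf : forall z j, 0 <= f z j <= B).

  Let HB : 0 <= B.
  Proof. destruct (Hf O O); lra. Qed.

  Lemma nb_inner_bound z : 0 <= nb_inner r1 r2 p f z <= nb_pmf r1 p z * (B / p).
  Proof.
    pose proof (nb_pmf_nonneg r1 p z Hr1 Hp) as Pz.
    apply series_nonneg_bounded.
    - intros j. pose proof (nb_pmf_nonneg r2 p j Hr2 Hp). destruct (Hf z j).
      apply Rmult_le_pos; [apply Rmult_le_pos|]; assumption.
    - intros n. apply Rle_trans with (sum_f_R0 (fun j => nb_pmf r2 p j * (nb_pmf r1 p z * B)) n).
      + apply sum_Rle; intros j _. pose proof (nb_pmf_nonneg r2 p j Hr2 Hp). destruct (Hf z j).
        replace (nb_pmf r2 p j * (nb_pmf r1 p z * B)) with (nb_pmf r1 p z * nb_pmf r2 p j * B) by ring.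
        apply Rmult_le_compat_l; [apply Rmult_le_pos|]; assumption.
      + rewrite <- scal_sum. unfold Rdiv. rewrite Rmult_assoc.
        apply Rmult_le_compat_l; [exact Pz|]. apply Rmult_le_compat_l; [exact HB|].
        apply nb_partial_mass_le; assumption.
  Qed.

  (* The expectation exists and is bounded by B/p^2 (one 1/p per NB factor). *)
  Lemma nb_expect_bound : ex_series (nb_inner r1 r2 p f) /\ 0 <= nb_expect r1 r2 p f <= B / (p * p).
  Proof.
    apply series_nonneg_bounded; [intros z; apply nb_inner_bound|].
    intros n. apply Rle_trans with (sum_f_R0 (fun z => nb_pmf r1 p z * (B / p)) n).
    - apply sum_Rle; intros z _. apply nb_inner_bound.
    - rewrite <- scal_sum. replace (B / (p * p)) with (B / p * / p) by (field; lra).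
      apply Rmult_le_compat_l; [apply Rmult_le_pos; [exact HB | apply Rlt_le, Rinv_0_lt_compat; lra]|].
      apply nb_partial_mass_le; assumption.
  Qed.
End Expectation.

Lemma nb_expect_gap r1 r2 p B (f0 f1 : nat -> nat -> R) m :
  0 <= r1 -> 0 <= r2 -> 0 < p < 1 ->
  (forall z j, 0 <= f0 z j <= B) -> (forall z j, 0 <= f1 z j <= B) ->
  (forall z j, (m < z)%nat -> f0 z j = f1 z j) ->
  nb_expect r1 r2 p f0 - nb_expect r1 r2 p f1 <= B / p * sum_f_R0 (nb_pmf r1 p) m.
Proof.
  intros Hr1 Hr2 Hp Hf0 Hf1 Hagree.
  destruct (nb_expect_bound r1 r2 p B f0 Hr1 Hr2 Hp Hf0) as [E0 _].
  destruct (nb_expect_bound r1 r2 p B f1 Hr1 Hr2 Hp Hf1) as [E1 _].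
  change (Series (nb_inner r1 r2 p f0) - Series (nb_inner r1 r2 p f1)
          <= B / p * sum_f_R0 (nb_pmf r1 p) m).
  rewrite <- Series_minus by assumption.
  rewrite series_finite_support with (m := m).
  - rewrite scal_sum. apply sum_Rle; intros z _.
    pose proof (nb_inner_bound r1 r2 p B f0 Hr1 Hr2 Hp Hf0 z).
    pose proof (nb_inner_bound r1 r2 p B f1 Hr1 Hr2 Hp Hf1 z). lra.
  - intros z Hz. unfold nb_inner.
    rewrite (Series_ext (fun j => nb_pmf r1 p z * nb_pmf r2 p j * f0 z j)
                        (fun j => nb_pmf r1 p z * nb_pmf r2 p j * f1 z j)); [ring|].
    intros j. rewrite Hagree by exact Hz. reflexivity.
Qed.

Lemma p_t_bounds N b0 t : 0 < b0 -> b0 / (b0 + 1) <= p_t N b0 t < 1.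
Proof.
  intros Hb; unfold p_t.
  pose proof (Rmult_le_pos _ _ (pos_INR N) (pos_INR t)).
  set (s := b0 + INR N * INR t). assert (b0 <= s) by (unfold s; lra).
  split.
  - apply (Rmult_le_reg_r ((b0 + 1) * (s + 1))); [nra|].
    replace (b0 / (b0 + 1) * ((b0 + 1) * (s + 1))) with (b0 * (s + 1)) by (field; lra).
    replace (s / (s + 1) * ((b0 + 1) * (s + 1))) with (s * (b0 + 1)) by (field; lra). nra.
  - apply (Rmult_lt_reg_r (s + 1)); [lra|].
    replace (s / (s + 1) * (s + 1)) with s by (field; lra). lra.
Qed.

Lemma p_t_prob N b0 t : 0 < b0 -> 0 < p_t N b0 t < 1.
Proof.
  intros Hb. pose proof (p_t_bounds N b0 t Hb).
  assert (0 < b0 / (b0 + 1)) by (apply Rdiv_lt_0_compat; lra). lra.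
Qed.

Lemma cost_bound xi cp cu x a : 0 < cp -> 0 < cu -> 0 <= cost xi cp cu x a <= cp + cu.
Proof. intros. unfold cost, Defs.ind, aR. destruct a, (xi <=? x)%nat; split; lra. Qed.

(* Uniform bound on the value function with r epochs remaining, where pm is a
   lower bound for all success probabilities. *)
Fixpoint value_bound (cp cu pm : R) (r : nat) : R :=
  match r with
  | O => cu
  | S r' => cp + cu + value_bound cp cu pm r' / (pm * pm)
  end.

Lemma value_bound_nonneg cp cu pm r : 0 < cp -> 0 < cu -> 0 < pm -> 0 <= value_bound cp cu pm r.
Proof.
  intros Hcp Hcu Hpm; induction r as [|r IH]; simpl; [lra|].
  assert (0 <= value_bound cp cu pm r / (pm * pm))
    by (unfold Rdiv; apply Rmult_le_pos; [exact IH | apply Rlt_le, Rinv_0_lt_compat; nra]).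
  lra.
Qed.

Lemma Vrem_bounded N T a0 b0 xi cp cu r : 0 <= a0 -> 0 < b0 -> 0 < cp -> 0 < cu ->
  forall x k, 0 <= Vrem N T a0 b0 xi cp cu r x k <= value_bound cp cu (b0 / (b0 + 1)) r.
Proof.
  intros Ha Hb Hcp Hcu. set (pm := b0 / (b0 + 1)).
  assert (Hpm : 0 < pm) by (unfold pm; apply Rdiv_lt_0_compat; lra).
  induction r as [|r IH]; intros x k.
  - simpl. unfold Defs.ind. destruct (xi <=? x)%nat; lra.
  - set (p := p_t N b0 (T - S r)).
    destruct (p_t_bounds N b0 (T - S r) Hb) as [Hpp Hp1]. fold pm p in Hpp, Hp1.
    assert (Hq : forall a, 0 <= qval N a0 b0 xi cp cu (Vrem N T a0 b0 xi cp cu r) (T - S r) x k a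
                          <= value_bound cp cu pm (S r)).
    { intros a. unfold qval. fold p.
      pose proof (pos_INR k). pose proof (pos_INR (N - 1)).
      destruct (nb_expect_bound (a0 + INR k) (INR (N - 1) * (a0 + INR k)) p (value_bound cp cu pm r)
        (fun z j => Vrem N T a0 b0 xi cp cu r (if a then z else (x + z)%nat) (k + z + j)%nat))
        as [_ [E1 E2]]; [lra | apply Rmult_le_pos; lra | lra | intros; apply IH |].
      pose proof (cost_bound xi cp cu x a Hcp Hcu).
      pose proof (value_bound_nonneg cp cu pm r Hcp Hcu Hpm).
      assert (value_bound cp cu pm r / (p * p) <= value_bound cp cu pm r / (pm * pm)).
      { unfold Rdiv. apply Rmult_le_compat_l; [assumption|].
        apply Rinv_le_contravar; [nra | apply Rmult_le_compat; lra]. }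
      simpl. lra. }
    cbn [Vrem]. destruct (xi <=? x)%nat; [apply Hq|].
    unfold Rmin. destruct (Rle_dec _ _); apply Hq.
Qed.

(* Above the threshold replacement is forced, so the value ignores the age. *)
Lemma Vrem_age_irrelevant N T a0 b0 xi cp cu r y y' k : (xi <= y)%nat -> (xi <= y')%nat ->
  Vrem N T a0 b0 xi cp cu r y k = Vrem N T a0 b0 xi cp cu r y' k.
Proof.
  intros Hy Hy'. destruct r; cbn [Vrem]; unfold qval, cost, Defs.ind;
    rewrite (proj2 (Nat.leb_le _ _) Hy), (proj2 (Nat.leb_le _ _) Hy'); reflexivity.
Qed.

Lemma nb_pmf_shape_ratio r p z : 0 < r -> 0 < p < 1 ->
  nb_pmf (r + 1) p z = nb_pmf r p z * (p * (1 + INR z * / r)).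
Proof.
  intros Hr Hp. unfold nb_pmf. rewrite Rpower_plus, Rpower_1 by lra.
  assert (E : rising (r + 1) z = rising r z * (r + INR z) / r).
  { change (rising r z * (r + INR z)) with (rising r (S z)). rewrite rising_shift. field. lra. }
  rewrite E. pose proof (fact_INR_pos z). field. lra.
Qed.

(* For fixed z, the weights NB(a0+k,p)(z) are summable in k (ratio test with
   limit ratio p < 1), hence tend to 0. *)
Lemma nb_pmf_vanishes a0 p z : 0 < a0 -> 0 < p < 1 ->
  is_lim_seq (fun k => nb_pmf (a0 + INR k) p z) 0.
Proof.
  intros Ha Hp.
  set (a := fun k => nb_pmf (a0 + INR k) p z).
  assert (Hpos : forall k, 0 < a k)
    by (intros k; unfold a; apply nb_pmf_pos; [pose proof (pos_INR k); lra | exact Hp]).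
  assert (Hratio : forall k, a (S k) / a k = p * (1 + INR z * / (a0 + INR k))).
  { intros k. unfold a. rewrite S_INR.
    replace (a0 + (INR k + 1)) with ((a0 + INR k) + 1) by ring.
    assert (Hk : 0 < a0 + INR k) by (pose proof (pos_INR k); lra).
    pose proof (nb_pmf_pos (a0 + INR k) p z Hk Hp).
    rewrite nb_pmf_shape_ratio by assumption. field. lra. }
  assert (Hinv : is_lim_seq (fun k => / (a0 + INR k)) 0).
  { apply (is_lim_seq_inv _ p_infty); [|discriminate].
    apply (is_lim_seq_plus _ _ a0 p_infty); [apply is_lim_seq_const | apply is_lim_seq_INR | reflexivity]. }
  assert (Hlim : is_lim_seq (fun k => p * (1 + INR z * / (a0 + INR k))) p).
  { pose proof (is_lim_seq_scal_l _ (INR z) _ Hinv) as H1. simpl in H1. rewrite Rmult_0_r in H1.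
    pose proof (is_lim_seq_plus' _ _ 1 0 (is_lim_seq_const 1) H1) as H2. rewrite Rplus_0_r in H2.
    pose proof (is_lim_seq_scal_l _ p _ H2) as H3. simpl in H3. rewrite Rmult_1_r in H3. exact H3. }
  assert (Hsum : ex_series (fun n => Rabs (a n))).
  { apply (ex_series_DAlembert a p); [lra | intros n; specialize (Hpos n); lra|].
    apply is_lim_seq_ext with (2 := Hlim). intros n.
    rewrite Rabs_pos_eq; [symmetry; apply Hratio|].
    apply Rlt_le, Rdiv_lt_0_compat; apply Hpos. }
  apply ex_series_lim_0 in Hsum. apply is_lim_seq_ext with (2 := Hsum).
  intros n. apply Rabs_pos_eq, Rlt_le, Hpos.
Qed.

Lemma nb_mass_eventually_small a0 p m eps : 0 < a0 -> 0 < p < 1 -> 0 < eps ->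
  exists K0, forall k, (K0 <= k)%nat -> sum_f_R0 (nb_pmf (a0 + INR k) p) m < eps.
Proof.
  intros Ha Hp He.
  assert (Hlim : is_lim_seq (fun k => sum_f_R0 (nb_pmf (a0 + INR k) p) m) 0).
  { induction m as [|m IH]; simpl; [apply nb_pmf_vanishes; assumption|].
    pose proof (is_lim_seq_plus' _ _ 0 0 IH (nb_pmf_vanishes a0 p (S m) Ha Hp)) as H.
    rewrite Rplus_0_r in H. exact H. }
  apply is_lim_seq_spec in Hlim. destruct (Hlim (mkposreal eps He)) as [K0 HK].
  exists K0; intros k Hk. specialize (HK k Hk). simpl in HK.
  rewrite Rminus_0_r in HK. apply Rabs_lt_between in HK. lra.
Qed.

Lemma replacement_penalty N T a0 b0 xi cp cu t x k :
  0 < a0 -> 0 < b0 -> 0 < cp -> 0 < cu -> (x < xi)%nat ->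
  let p := p_t N b0 t in
  let B := value_bound cp cu (b0 / (b0 + 1)) (T - (t + 1)) in
  let Q := qval N a0 b0 xi cp cu (Vt N T a0 b0 xi cp cu (t + 1)) t x k in
  Q true - Q false >= cp - B / p * sum_f_R0 (nb_pmf (a0 + INR k) p) (xi - 1).
Proof.
  intros Ha Hb Hcp Hcu Hx p B Q.
  assert (Hp : 0 < p < 1) by apply p_t_prob, Hb.
  assert (Hind : Defs.ind xi x = 0) by (unfold Defs.ind; destruct (Nat.leb_spec xi x); [lia | reflexivity]).
  assert (HV : forall y k', 0 <= Vt N T a0 b0 xi cp cu (t + 1) y k' <= B)
    by (intros; apply Vrem_bounded; lra).
  assert (Hr1 : 0 <= a0 + INR k) by (pose proof (pos_INR k); lra).
  assert (Hr2 : 0 <= INR (N - 1) * (a0 + INR k)) by (apply Rmult_le_pos; [apply pos_INR | exact Hr1]).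
  assert (Hagree : forall z j, (xi - 1 < z)%nat ->
            Vt N T a0 b0 xi cp cu (t + 1) (x + z)%nat (k + z + j)%nat
            = Vt N T a0 b0 xi cp cu (t + 1) z (k + z + j)%nat)
    by (intros; apply Vrem_age_irrelevant; lia).
  pose proof (nb_expect_gap _ _ p B _ _ (xi - 1) Hr1 Hr2 Hp
                (fun z j => HV _ _) (fun z j => HV _ _) Hagree) as Hgap.
  unfold Q, qval, cost. rewrite Hind. simpl aR. fold p. lra.
Qed.

Theorem proposition3 (N T : nat) (a0 b0 : R) (xi : nat -> nat) (cp cu : nat -> R) :
  (1 <= N)%nat -> (1 <= T)%nat -> 0 < a0 -> 0 < b0 ->
  (forall i, (1 <= i <= N)%nat -> (1 <= xi i)%nat /\ 0 < cp i /\ cp i < cu i) ->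
  forall t i, (t < T)%nat -> (1 <= i <= N)%nat ->
  exists K0 : nat, forall k : nat, (K0 <= k)%nat ->
    forall x : nat, (x < xi i)%nat ->
      ~ optimal N T a0 b0 (xi i) (cp i) (cu i) t x k true.
Proof.
  intros _ _ Ha Hb Hdata t i _ Hi. destruct (Hdata i Hi) as [_ [Hcp Hcu]].
  set (p := p_t N b0 t).
  assert (Hp : 0 < p < 1) by apply p_t_prob, Hb.
  set (B := value_bound (cp i) (cu i) (b0 / (b0 + 1)) (T - (t + 1))).
  assert (HB : 0 <= B) by (apply value_bound_nonneg; [| | apply Rdiv_lt_0_compat]; lra).
  (* choose the mass threshold so that the penalty stays positive *)
  set (eps := cp i * p / (B + 1)).
  assert (Heps : 0 < eps) by (apply Rdiv_lt_0_compat; [apply Rmult_lt_0_compat|]; lra).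
  destruct (nb_mass_eventually_small a0 p (xi i - 1) eps Ha Hp Heps) as [K0 HK0].
  exists K0; intros k Hk x Hx [_ Hopt].
  specialize (Hopt false (or_intror Hx)).
  pose proof (replacement_penalty N T a0 b0 (xi i) (cp i) (cu i) t x k Ha Hb Hcp ltac:(lra) Hx) as Hpen.
  simpl in Hpen. fold p B in Hpen.
  specialize (HK0 k Hk).
  assert (Hsmall : B / p * sum_f_R0 (nb_pmf (a0 + INR k) p) (xi i - 1) < cp i).
  { apply Rle_lt_trans with (B / p * eps).
    - apply Rmult_le_compat_l; [apply Rmult_le_pos; [|apply Rlt_le, Rinv_0_lt_compat]|]; lra.
    - assert (Hmargin : cp i - B / p * eps = cp i / (B + 1)) by (unfold eps; field; lra).
      assert (0 < cp i / (B + 1)) by (apply Rdiv_lt_0_compat; lra). lra. }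
  lra.
Qed.
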